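(* Let $G$ be a graph on $n$ vertices with $\alpha(G)=2$. Then $\xi_f(G)\ge \frac{n}{2}$.
   Context: $\alpha(G)$ is the independence number. For positive integers $d,r$, a $d/r$-representation of a graph $G=(V,E)$ is a collection $\{P_v\}_{v\in V}$ of $d\times d$ orthogonal projectors, each of rank $r$, such that $P_vP_w=0$ for every edge $vw\in E$. The projective rank is $\xi_f(G)=\inf\{d/r : G \text{ has a } d/r\text{-representation}\}$. *)

From HB Require Import structures.
From mathcomp Require Import all_boot all_order all_algebra.
From mathcomp Require Import boolp classical_sets reals.
From mathcomp Require Import complex.
Set Implicit Arguments. Unset Strict Implicit. Unset Printing Implicit Defensive.
Import Order.TTheory GRing.Theory Num.Theory.
Local Open Scope ring_scope.
Local Open Scope complex_scope.

Definition simple_graph (T : finType) (e : rel T) : Prop :=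
  symmetric e /\ irreflexive e.

Definition independent (T : finType) (e : rel T) (S : {set T}) : bool :=
  [forall x in S, forall y in S, ~~ e x y].

Definition independence_number (T : finType) (e : rel T) : nat :=
  \max_(S : {set T} | independent e S) #|S|.

Definition adjmx (R : rcfType) (d : nat) (A : 'M[R[i]]_d) : 'M[R[i]]_d :=
  (map_mx (@conjc R) A)^T.

Definition orth_projector (R : rcfType) (d : nat) (P : 'M[R[i]]_d) : Prop :=
  P *m P = P /\ adjmx P = P.

Definition dr_representation (R : rcfType) (T : finType) (e : rel T)
    (d r : nat) (P : T -> 'M[R[i]]_d) : Prop :=
  (forall v, orth_projector (P v) /\ \rank (P v) = r) /\
  (forall v w, e v w -> P v *m P w = 0).

Definition projective_rank (R : realType) (T : finType) (e : rel T) : R :=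
  inf [set x : R | exists d r : nat, [/\ (0 < d)%N, (0 < r)%N,
         x = d%:R / r%:R &
         exists P : T -> 'M[R[i]]_d, @dr_representation R T e d r P]].

(* Put A := \sum_v P v.  Because alpha(G) = 2, the non-neighbours of a vertex v
   other than v form a clique, so their projectors sum to a projector W_v, while
   the neighbours of v annihilate P v; hence P v A = P v + P v W_v.  Tracing
   P v A^2 and P v A against this gives tr(P v A^2) = 3 tr(P v A) - 2 r, and
   summing over v, tr A^3 - 3 tr A^2 + 2 tr A = 0.  As A is positive
   semidefinite, 0 <= tr((A + 1)(A - 2)^2) = tr A^3 - 3 tr A^2 + 4 d = 4 d - 2 n r,
   that is d / r >= n / 2. *)
From HB Require Import structures.
From mathcomp Require Import all_boot all_order all_algebra.
From mathcomp Require Import boolp classical_sets reals.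
From mathcomp Require Import complex.
From mathcomp Require Import ring zify.
Set Implicit Arguments.
Unset Strict Implicit.
Unset Printing Implicit Defensive.

Import Order.TTheory GRing.Theory Num.Theory.
Local Open Scope ring_scope.

Section Adjoint.
Variables (R : rcfType) (d : nat).
Implicit Types A B M : 'M[R[i]]_d.

Lemma adjmx0 : adjmx (0 : 'M[R[i]]_d) = 0.
Proof. by rewrite /adjmx map_mx0 trmx0. Qed.

Lemma adjmxD A B : adjmx (A + B) = adjmx A + adjmx B.
Proof. by rewrite /adjmx map_mxD linearD. Qed.

Lemma adjmxB A B : adjmx (A - B) = adjmx A - adjmx B.
Proof. by rewrite /adjmx map_mxB linearB. Qed.

Lemma adjmx_sum (I : Type) (s : seq I) (p : pred I) (F : I -> 'M[R[i]]_d) :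
  adjmx (\sum_(i <- s | p i) F i) = \sum_(i <- s | p i) adjmx (F i).
Proof. exact: (big_morph _ adjmxD adjmx0). Qed.

Lemma adjmx_scalar_nat (n : nat) : adjmx (n%:R%:M : 'M[R[i]]_d) = n%:R%:M.
Proof. by rewrite /adjmx map_scalar_mx /= conjc_nat tr_scalar_mx. Qed.

Lemma adjmxM A B : adjmx (A *m B) = adjmx B *m adjmx A.
Proof. by rewrite /adjmx map_mxM trmx_mul. Qed.

Lemma mxtrace_adjmx_mul_ge0 M : 0 <= \tr (adjmx M *m M).
Proof.
rewrite /mxtrace; apply: sumr_ge0 => i _; rewrite mxE; apply: sumr_ge0 => k _.
by rewrite !mxE mulrC; apply: mulcJ_ge0.
Qed.

End Adjoint.

(* Along the rank factorisation P = C B, idempotence forces B C = 1, whence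
   tr P = tr (B C) = rank P. *)
Lemma mxtrace_idem (F : fieldType) (d : nat) (P : 'M[F]_d) :
  P *m P = P -> \tr P = (\rank P)%:R.
Proof.
move=> PP; have eP := mulmx_base P.
have Cfree : row_free (col_base P)^T.
  by rewrite /row_free mxrank_tr; have := col_base_full P; rewrite /row_full.
have Bfree := row_base_free P.
move: Cfree Bfree eP; move: (col_base P) (row_base P) => C B Cfree Bfree eP.
have CBC : C *m B *m C = C.
  by apply: (row_free_inj Bfree); rewrite -mulmxA eP PP.
have BC : B *m C = 1%:M.
  apply: trmx_inj; rewrite trmx1; apply: (row_free_inj Cfree) => /=.
  by rewrite -trmx_mul mulmxA CBC mul1mx.
by rewrite -{1}eP mxtrace_mulC BC mxtrace1.
Qed.

Lemma mxtrace_shifted_cube (F : comNzRingType) (n : nat) (A : 'M[F]_n) :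
  let B := A - 2%:R%:M in
  \tr (B *m B) + \tr (B *m A *m B) =
  \tr (A *m A *m A) - 3%:R * \tr (A *m A) + 4%:R * n%:R.
Proof.
move=> B; rewrite /B !mulmxBl !mulmxBr !mul_scalar_mx !mul_mx_scalar -scalemxAl.
by rewrite !raddfB /= !mxtraceZ mxtrace_scalar -[_ *+ n]mulr_natr; ring.
Qed.

Lemma mulmx_sum_orthogonal_idem (F : pzRingType) (I : finType) (d : nat)
    (Q : I -> 'M[F]_d) (S : pred I) :
  (forall i, Q i *m Q i = Q i) ->
  (forall i j, S i -> S j -> i != j -> Q i *m Q j = 0) ->
  (\sum_(i | S i) Q i) *m (\sum_(i | S i) Q i) = \sum_(i | S i) Q i.
Proof.
move=> QQ Qorth; rewrite mulmx_suml; apply: eq_bigr => i Si.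
rewrite mulmx_sumr (bigD1 i) //= QQ big1 ?addr0 // => j /andP[Sj ji].
by apply: Qorth; rewrite // eq_sym.
Qed.

Section IndependenceNumber.
Variables (T : finType) (e : rel T).

Lemma independent_card_le (S : {set T}) :
  independent e S -> (#|S| <= independence_number e)%N.
Proof. exact: (@leq_bigmax_cond _ (independent e) (fun S => #|S|)). Qed.

Lemma independence_number_le_card : (independence_number e <= #|T|)%N.
Proof. by apply/bigmax_leqP => S _; apply: max_card. Qed.

Lemma nonneighbours_adjacent : simple_graph e -> (independence_number e <= 2)%N ->
  forall v w w', w != v -> w' != v -> w' != w -> ~~ e v w -> ~~ e v w' -> e w w'.
Proof.
move=> [sym irr] alpha2 v w w' wv w'v w'w evw evw'.
apply/negPn/negP => eww'.
have indep : independent e [set v; w; w'].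
  apply/forallP => x; apply/implyP; rewrite !inE => /orP[/orP[]|] /eqP ->;
  apply/forallP => y; apply/implyP; rewrite !inE => /orP[/orP[]|] /eqP ->;
  by rewrite ?irr ?evw ?evw' ?eww' // sym ?evw ?evw' ?eww'.
have := leq_trans (independent_card_le indep) alpha2.
rewrite finset.setUC cardsU1 cardsU1 cards1 !inE.
by rewrite (negbTE w'v) (negbTE w'w) eq_sym wv.
Qed.

End IndependenceNumber.

Section RepresentationBound.
Variables (R : rcfType) (T : finType) (e : rel T) (d r : nat).
Variable P : T -> 'M[R[i]]_d.
Hypothesis e_sym : symmetric e.
Hypothesis nonneighbours_clique : forall v w w', w != v -> w' != v -> w' != w ->
  ~~ e v w -> ~~ e v w' -> e w w'.
Hypothesis P_rep : dr_representation e r P.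

Let A := \sum_v P v.

Let P_idem v : P v *m P v = P v. Proof. exact: (P_rep.1 v).1.1. Qed.
Let P_herm v : adjmx (P v) = P v. Proof. exact: (P_rep.1 v).1.2. Qed.
Let P_orth v w : e v w -> P v *m P w = 0. Proof. exact: P_rep.2. Qed.
Let mxtrace_P v : \tr (P v) = r%:R.
Proof. by rewrite mxtrace_idem // (P_rep.1 v).2. Qed.

Lemma mxtrace_projector_cubic v :
  \tr (P v *m A *m A) - 3%:R * \tr (P v *m A) + 2%:R * \tr (P v) = 0.
Proof.
pose W := \sum_(w | (w != v) && ~~ e v w) P w.
pose N := \sum_(w | (w != v) && e v w) P w.
have A_split : A = P v + W + N.
  by rewrite /A (bigD1 v) //= (bigID (e v)) /= [N + W]addrC addrA.
have PN : P v *m N = 0.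
  by rewrite mulmx_sumr big1 // => w /andP[_ evw]; apply: P_orth.
have NP : N *m P v = 0.
  by rewrite mulmx_suml big1 // => w /andP[_ evw]; apply: P_orth; rewrite e_sym.
have WW : W *m W = W.
  apply: mulmx_sum_orthogonal_idem => // w w' /andP[wv evw] /andP[w'v evw'] ww'.
  by apply: P_orth; apply: (nonneighbours_clique (v := v)); rewrite // eq_sym.
have PA : P v *m A = P v + P v *m W by rewrite A_split !mulmxDr P_idem PN addr0.
have AP : A *m P v = P v + W *m P v by rewrite A_split !mulmxDl P_idem NP addr0.
have trPA : \tr (P v *m A) = r%:R + \tr (P v *m W) by rewrite PA mxtraceD mxtrace_P.
have trPAA : \tr (P v *m A *m A) = r%:R + 3%:R * \tr (P v *m W).
  have -> : \tr (P v *m A *m A) = \tr ((A *m P v) *m (P v *m A)).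
    by rewrite mxtrace_mulC !mulmxA -(mulmxA A) P_idem.
  (* The three cross terms all have trace tr (P v W), by cyclicity and W^2 = W. *)
  rewrite AP PA mulmxDl !mulmxDr mulmxA P_idem -mulmxA P_idem.
  rewrite -(mulmxA W) (mulmxA (P v)) P_idem !mxtraceD mxtrace_P.
  rewrite (mxtrace_mulC W) mulmxA (mxtrace_mulC (W *m P v)) mulmxA WW.
  rewrite (mxtrace_mulC W); ring.
by rewrite trPAA trPA mxtrace_P; ring.
Qed.

Lemma mxtrace_cubic : \tr (A *m A *m A) - 3%:R * \tr (A *m A) + 2%:R * \tr A = 0.
Proof.
rewrite {1 2 4}/A !mulmx_suml !raddf_sum !mulr_sumr -sumrB -big_split /=.
by apply: big1 => v _; apply: mxtrace_projector_cubic.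
Qed.

Lemma mxtrace_sum_projectors : \tr A = (#|T| * r)%:R.
Proof.
rewrite /A raddf_sum (eq_bigr _ (fun v _ => mxtrace_P v)) sumr_const.
by rewrite natrM mulrC mulr_natr cardE.
Qed.

Lemma mxtrace_shifted_cube_ge0 :
  0 <= \tr (A *m A *m A) - 3%:R * \tr (A *m A) + 4%:R * d%:R.
Proof.
pose B := A - 2%:R%:M.
have B_herm : adjmx B = B.
  by rewrite adjmxB adjmx_sum adjmx_scalar_nat (eq_bigr _ (fun v _ => P_herm v)).
have BPB_ge0 v : 0 <= \tr (B *m P v *m B).
  have -> : B *m P v *m B = adjmx (P v *m B) *m (P v *m B).
    by rewrite adjmxM B_herm P_herm mulmxA -(mulmxA B (P v) (P v)) P_idem.
  exact: mxtrace_adjmx_mul_ge0.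
have BAB_ge0 : 0 <= \tr (B *m A *m B).
  rewrite /A mulmx_sumr mulmx_suml raddf_sum; apply: sumr_ge0 => v _.
  exact: BPB_ge0.
have BB_ge0 : 0 <= \tr (B *m B) by rewrite -{1}B_herm mxtrace_adjmx_mul_ge0.
by rewrite -mxtrace_shifted_cube; apply: addr_ge0.
Qed.

Lemma dr_representation_bound : (#|T| * r <= 2 * d)%N.
Proof.
have := mxtrace_shifted_cube_ge0.
have -> : \tr (A *m A *m A) - 3%:R * \tr (A *m A) + 4%:R * d%:R =
    (\tr (A *m A *m A) - 3%:R * \tr (A *m A) + 2%:R * \tr A)
    + (4%:R * d%:R - 2%:R * \tr A) by ring.
rewrite mxtrace_cubic add0r mxtrace_sum_projectors subr_ge0 -!natrM ler_nat.
lia.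
Qed.

End RepresentationBound.

Lemma delta_dr_representation (R : rcfType) (T : finType) (e : rel T) :
  irreflexive e ->
  dr_representation e 1 (fun v : T => delta_mx (enum_rank v) (enum_rank v) : 'M[R[i]]_#|T|).
Proof.
move=> irr; split.
  move=> v; split; [split|]; first by rewrite mul_delta_mx.
    by apply/matrixP => i j; rewrite /adjmx !mxE conjc_nat andbC.
  by rewrite mxrank_delta.
move=> v w evw; apply: mul_delta_mx_0; rewrite (inj_eq enum_rank_inj).
by apply/eqP => vw; move: evw; rewrite vw irr.
Qed.

Theorem proposition1p6 (R : realType) (T : finType) (e : rel T) :
  simple_graph e ->
  independence_number e = 2%N ->
  (#|T|%:R / 2%:R : R) <= projective_rank R e.
Proof.
move=> G alpha2; have [e_sym e_irr] := G.
have n_ge2 : (2 <= #|T|)%N by rewrite -alpha2 independence_number_le_card.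
have clique := nonneighbours_adjacent G (eq_leq alpha2).
apply: lb_le_inf.
  exists (#|T|%:R / 1%:R), #|T|, 1%N; split => //; first by lia.
  by exists (fun v => delta_mx (enum_rank v) (enum_rank v)); apply: delta_dr_representation.
move=> _ [d [r [d_gt0 r_gt0 -> [P P_rep]]]].
have := dr_representation_bound e_sym clique P_rep.
rewrite ler_pdivlMr ?ltr0n // mulrAC ler_pdivrMr ?ltr0n // -!natrM ler_nat; lia.
Qed.
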